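(* Let $P=R\cup B$ where $R$ is a set of $n$ red points and $B$ a set of $n$ blue points, all distinct and on the line $y=0$, and let $p_1<p_2<\dots<p_{2n}$ be the points of $P$ sorted by $x$-coordinate. Let $2m$ be the smallest positive integer such that $\{p_1,\dots,p_{2m}\}$ contains equally many red and blue points (so $P_1=\{p_1,\dots,p_{2m}\}$ is the first color-balanced prefix). Then $p_1$ and $p_{2m}$ have different colors, and every minimum-weight non-crossing bichromatic perfect matching of $P$ contains the edge $\{p_1,p_{2m}\}$. *)

From HB Require Import structures.
From mathcomp Require Import all_boot all_order all_algebra.
Set Implicit Arguments. Unset Strict Implicit. Unset Printing Implicit Defensive.
Import Order.TTheory GRing.Theory Num.Theory.
Local Open Scope ring_scope.

(* Points of P are indexed by 'I_N in increasing order of x-coordinate: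
   index i (0-based) is the point p_{i+1}.  The set of red indices is [red];
   the others are blue. *)

Definition perfect_matching (N : nat) (f : 'I_N -> 'I_N) : Prop :=
  forall i, f (f i) = i /\ f i != i.

Definition bichromatic (N : nat) (red : {set 'I_N}) (f : 'I_N -> 'I_N) : Prop :=
  forall i, (i \in red) != (f i \in red).

Definition noncrossing (N : nat) (f : 'I_N -> 'I_N) : Prop :=
  forall i j : 'I_N, ~ [/\ (i < j)%N, (j < f i)%N & (f i < f j)%N].

Definition mweight (R : realFieldType) (N : nat) (x : 'I_N -> R)
  (f : 'I_N -> 'I_N) : R :=
  \sum_(i : 'I_N | (i < f i)%N) `|x (f i) - x i|.

Definition admissible (N : nat) (red : {set 'I_N}) (f : 'I_N -> 'I_N) : Prop :=
  [/\ perfect_matching f, bichromatic red f & noncrossing f].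

Definition min_weight_matching (R : realFieldType) (N : nat) (x : 'I_N -> R)
  (red : {set 'I_N}) (f : 'I_N -> 'I_N) : Prop :=
  admissible red f /\
  forall g, admissible red g -> mweight x f <= mweight x g.

Definition balanced_prefix (N : nat) (red : {set 'I_N}) (k : nat) : bool :=
  #|[set i : 'I_N | (i < k)%N & i \in red]| ==
  #|[set i : 'I_N | (i < k)%N & i \notin red]|.

From HB Require Import structures.
From mathcomp Require Import all_boot all_order all_algebra perm.
From mathcomp Require Import zify lra.
Import Order.TTheory GRing.Theory Num.Theory.
Set Implicit Arguments. Unset Strict Implicit. Unset Printing Implicit Defensive.
Local Open Scope ring_scope.

(* Let D k be the number of red minus blue points among p_1, ..., p_k.  D
   moves by +-1, vanishes at 0 and at 2m and nowhere in between, so D 1 and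
   D (2m-1) have the same sign, which forces p_1 and p_2m to have different
   colours.

   In a bichromatic matching the edges with both ends in a prefix are
   balanced, so a balanced prefix has as many red as blue points matched
   outside it.  If a minimum matching f had an edge leaving the balanced prefix
   {p_1, ..., p_2m}, pick leaving points a1 < a2 of different colours with no
   leaving point between them.  Non-crossing makes their edges nested, and
   replacing {a1, f a1}, {a2, f a2} by {a1, a2}, {f a2, f a1} keeps the
   matching admissible while shortening it.  Hence the prefix is closed under
   f.  Finally the edge at p_1 encloses a prefix closed under f, hence
   balanced, and minimality of 2m pins f p_1 = p_2m. *)

Lemma int_unit_steps_ivt (D : nat -> int) (a b : nat) :
  (a <= b)%N -> (forall t, (a <= t < b)%N -> `|D t.+1 - D t| <= 1) ->
  D a <= 0 -> 0 <= D b -> exists2 t, (a <= t <= b)%N & D t = 0.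
Proof.
move=> le_ab; rewrite -(subnKC le_ab); elim: (b - a)%N => [|k IH] step Da Db.
  by exists a; rewrite ?addn0 ?leqnn //; apply/eqP; rewrite eq_le Da -(addn0 a).
have [Dk_ge0|Dk_lt0] := lerP 0 (D (a + k)%N).
  have step' t : (a <= t < a + k)%N -> `|D t.+1 - D t| <= 1.
    by move=> /andP[ta tk]; apply: step; lia.
  by have [t /andP[ta tk] Dt] := IH step' Da Dk_ge0; exists t; rewrite ?ta //=; lia.
exists (a + k.+1)%N; first by rewrite leq_addr leqnn.
move: Db; have := step (a + k)%N.
by rewrite leq_addr addnS ltnSn ler_norml => /(_ isT); lia.
Qed.

Section Prefixes.

Variable N : nat.
Implicit Types (A : {set 'I_N}) (k : nat).

Definition prefix k : {set 'I_N} := [set i : 'I_N | (i < k)%N].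

Lemma balanced_prefixE A k :
  balanced_prefix A k = (#|prefix k :&: A| == #|prefix k :&: ~: A|).
Proof. by rewrite /balanced_prefix; congr (_ == _); apply: eq_card => i; rewrite !inE. Qed.

Lemma balanced_prefixC A k : balanced_prefix (~: A) k = balanced_prefix A k.
Proof. by rewrite !balanced_prefixE setCK eq_sym. Qed.

Lemma card_prefixS A (i : 'I_N) :
  #|prefix i.+1 :&: A| = (#|prefix i :&: A| + (i \in A))%N.
Proof.
have prefixS : prefix i.+1 = i |: prefix i.
  by apply/setP => j; rewrite !inE ltnS leq_eqVlt val_eqE.
rewrite prefixS setIUl; case: (boolP (i \in A)) => iA.
  by rewrite (setIidPl _) ?sub1set // cardsU1 !inE ltnn addn1.
rewrite (_ : [set i] :&: A = set0) ?set0U ?addn0 //.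
by apply/setP => j; rewrite !inE; case: eqP => // ->; apply: negbTE.
Qed.

Definition discrepancy A k : int := #|prefix k :&: A|%:Z - #|prefix k :&: ~: A|%:Z.

Lemma balanced_prefix_discrepancy A k :
  balanced_prefix A k = (discrepancy A k == 0).
Proof. by rewrite balanced_prefixE /discrepancy subr_eq0 eqz_nat. Qed.

Lemma discrepancy0 A : discrepancy A 0 = 0.
Proof.
by rewrite /discrepancy (_ : prefix 0 = set0) ?set0I ?cards0 //; apply/setP => i.
Qed.

Lemma discrepancyS A (i : 'I_N) :
  discrepancy A i.+1 = discrepancy A i + (if i \in A then 1 else -1).
Proof. rewrite /discrepancy !card_prefixS inE; case: (i \in A) => /=; lia. Qed.

Lemma discrepancy_step A t : `|discrepancy A t.+1 - discrepancy A t| <= 1.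
Proof.
have [ltN|geN] := ltnP t N.
  by rewrite -[t]/(val (Ordinal ltN)) discrepancyS addrC addKr; case: ifP.
rewrite /discrepancy (_ : prefix t.+1 = prefix t) ?subrr ?normr0 //.
apply/setP => i; have lt_it := leq_trans (ltn_ord i) geN.
by rewrite !inE lt_it ltnS ltnW.
Qed.

Lemma first_balanced_prefix_end_colors A m (p1 p2m : 'I_N) :
  (0 < m)%N -> balanced_prefix A m.*2 ->
  (forall k, (0 < k)%N -> (k < m.*2)%N -> ~~ balanced_prefix A k) ->
  val p1 = 0%N -> val p2m = m.*2.-1 -> (p1 \in A) != (p2m \in A).
Proof.
move=> m_gt0 bal unbal p1_0 p2m_E.
wlog p1A : A bal unbal / p1 \in A => [sym|].
  case/orP: (orbN (p1 \in A)) => [p1A|p1nA]; first exact: sym bal unbal p1A.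
  have := @sym (~: A); rewrite !inE (inj_eq negb_inj) balanced_prefixC.
  by apply=> // k k_gt0 lt_k; rewrite balanced_prefixC unbal.
rewrite p1A; apply/negP => /eqP/esym p2mA.
have D1 : discrepancy A 1 = 1.
  by have := discrepancyS A p1; rewrite p1_0 discrepancy0 p1A add0r.
have D2m1 : discrepancy A m.*2.-1 = -1.
  have := discrepancyS A p2m; rewrite p2m_E prednK ?double_gt0 // p2mA.
  by move: bal; rewrite balanced_prefix_discrepancy => /eqP ->; lia.
have [|t|||t /andP[t_ge1 t_le] /eqP] :=
  @int_unit_steps_ivt (fun t => - discrepancy A t) 1 m.*2.-1.
- lia.
- by move=> _; rewrite opprK addrC distrC discrepancy_step.
- by rewrite D1.
- by rewrite D2m1.
by rewrite oppr_eq0 -balanced_prefix_discrepancy; apply/negP/unbal; lia.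
Qed.

End Prefixes.

Lemma adjacent_color_change N (L red : {set 'I_N}) (r b : 'I_N) :
  r \in L -> b \in L -> r \in red -> b \notin red ->
  exists a1 a2 : 'I_N, [/\ a1 \in L, a2 \in L, (a1 < a2)%N,
    (a1 \in red) != (a2 \in red) & forall s : 'I_N, (a1 < s < a2)%N -> s \notin L].
Proof.
move=> rL bL r_red b_blue.
pose P (p : 'I_N * 'I_N) :=
  [&& p.1 \in L, p.2 \in L, (p.1 < p.2)%N & (p.1 \in red) != (p.2 \in red)].
have P0 : P (if (r < b)%N then (r, b) else (b, r)).
  have r_neq_b : (r : nat) != b by apply: contraNneq b_blue => /val_inj <-.
  by rewrite /P; case: ltngtP r_neq_b => // lt_rb _ /=;
    rewrite rL bL lt_rb r_red (negbTE b_blue).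
case: (arg_minnP (fun p : 'I_N * 'I_N => (p.2 - p.1)%N) P0).
move=> [a1 a2] /and4P[a1L a2L lt_a1a2 colors].
move=> /= closest; exists a1, a2; split => // s /andP[lt1s lts2]; apply/negP => sL.
case: (eqVneq (s \in red) (a1 \in red)) => [same|diff].
  have := closest (s, a2); rewrite /P sL a2L lts2 same colors => /(_ isT) /=.
  by rewrite leqNgt ltn_sub2l // (ltn_trans lt1s).
have := closest (a1, s); rewrite /P sL a1L lt1s eq_sym diff => /(_ isT) /=.
by rewrite leqNgt ltn_sub2r // (ltn_trans lt1s).
Qed.

Section Matchings.

Variables (N : nat) (red : {set 'I_N}) (f : 'I_N -> 'I_N).
Hypothesis f_inv : involutive f.

Lemma noncrossing_inside : noncrossing f ->
  forall u v : 'I_N, (u < v < f u)%N -> (u < f v < f u)%N.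
Proof.
move=> nc u v /andP[lt_uv lt_vfu].
have fv_neq_u : (f v : nat) != u.
  by apply: contraTneq lt_vfu => /val_inj <-; rewrite f_inv ltnn.
have fv_neq_fu : (f v : nat) != f u.
  by apply: contraTneq lt_uv => /val_inj/(can_inj f_inv) ->; rewrite ltnn.
apply/andP; split.
  rewrite ltn_neqAle eq_sym fv_neq_u leqNgt; apply/negP => lt_fvu.
  by apply: (nc (f v) u); rewrite f_inv.
rewrite ltn_neqAle fv_neq_fu leqNgt; apply/negP => lt_fufv.
exact: (nc u v).
Qed.

Lemma noncrossing_first_edge_closed : noncrossing f ->
  forall p i : 'I_N, (p : nat) = 0%N -> (i <= f p)%N -> (f i <= f p)%N.
Proof.
move=> nc p i p_0; rewrite leq_eqVlt => /orP[/eqP/val_inj ->|lt_ifp].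
  by rewrite f_inv p_0.
have [/val_inj ->|i_neq_p] := eqVneq (i : nat) p; first exact: leqnn.
have /andP[_ /ltnW //] : (p < f i < f p)%N.
by apply: noncrossing_inside => //; rewrite lt_ifp andbT ltn_neqAle eq_sym i_neq_p p_0.
Qed.

Hypothesis f_bichrom : bichromatic red f.

Lemma bichromatic_mem i : (f i \in red) = (i \notin red).
Proof. by move: (f_bichrom i); case: (i \in red); case: (f i \in red). Qed.

Definition inner k := prefix N k :&: f @^-1: prefix N k.
Definition leaving k := prefix N k :\: f @^-1: prefix N k.

Lemma card_prefix_inner_leaving (A : {set 'I_N}) k :
  #|prefix N k :&: A| = (#|inner k :&: A| + #|leaving k :&: A|)%N.
Proof.
rewrite -(cardsID (f @^-1: prefix N k)) setIAC; congr (_ + _)%N.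
by apply: eq_card => i; rewrite !inE andbA.
Qed.

Lemma card_inner_colors k : #|inner k :&: red| = #|inner k :&: ~: red|.
Proof.
rewrite -[RHS](card_preimset _ (can_inj f_inv)); apply: eq_card => i.
by rewrite !inE f_inv bichromatic_mem negbK [(f i < k)%N && _]andbC.
Qed.

Lemma balanced_prefix_leaving k :
  balanced_prefix red k = (#|leaving k :&: red| == #|leaving k :&: ~: red|).
Proof.
by rewrite balanced_prefixE !card_prefix_inner_leaving card_inner_colors eqn_add2l.
Qed.

Lemma closed_prefix_balanced k :
  (forall i : 'I_N, (i < k)%N -> (f i < k)%N) -> balanced_prefix red k.
Proof.
move=> closed; rewrite balanced_prefix_leaving (_ : leaving k = set0) ?set0I //.
by apply/setP => i; rewrite !inE; case: (ltnP i k) => [/closed ->|]; rewrite ?andbF.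
Qed.

Lemma balanced_leaving_colors k i : balanced_prefix red k -> i \in leaving k ->
  exists r b, [/\ r \in leaving k, b \in leaving k, r \in red & b \notin red].
Proof.
rewrite balanced_prefix_leaving => /eqP card_eq i_lv.
have : (0 < #|leaving k|)%N by apply/card_gt0P; exists i.
rewrite -(cardsID red) setDE -card_eq addnn double_gt0 => red_lv.
have /card_gt0P[r /setIP[r_lv r_red]] := red_lv.
move: red_lv; rewrite card_eq => /card_gt0P[b /setIP[b_lv]].
by rewrite inE => b_blue; exists r, b.
Qed.

End Matchings.

Lemma ord_ltn_neq N (u v : 'I_N) : (u < v)%N -> u != v.
Proof. by apply: contraTneq => ->; rewrite ltnn. Qed.

Definition conj_matching N (s : {perm 'I_N}) (f : 'I_N -> 'I_N) i := s (f (s^-1%g i)).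

Lemma perfect_matching_conj N (s : {perm 'I_N}) f :
  perfect_matching f -> perfect_matching (conj_matching s f).
Proof.
move=> pm i; rewrite /conj_matching permK (pm _).1 permKV; split => //.
by rewrite -{2}(permKV s i) (inj_eq perm_inj) (pm _).2.
Qed.

Lemma bichromatic_conj N (red : {set 'I_N}) (s : {perm 'I_N}) f :
  (forall i, (s i \in red) = (i \in red)) ->
  bichromatic red f -> bichromatic red (conj_matching s f).
Proof.
by move=> s_red bi i; rewrite /conj_matching s_red -{1}(permKV s i) s_red bi.
Qed.

Lemma mweight_double (R : realFieldType) N (x : 'I_N -> R) f :
  perfect_matching f -> \sum_i `|x (f i) - x i| = mweight x f *+ 2.
Proof.
move=> pm; have f_inv : involutive f by move=> i; case: (pm i).
rewrite (bigID (fun i : 'I_N => (i < f i)%N)) /= mulr2n; congr (_ + _).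
rewrite (reindex_inj (can_inj f_inv)); apply: eq_big => i /=; last by rewrite f_inv distrC.
by rewrite f_inv -leqNgt leq_eqVlt val_eqE eq_sym (negbTE (pm i).2).
Qed.

Section Swap.

Variables (N : nat) (red : {set 'I_N}) (f : 'I_N -> 'I_N) (a1 a2 : 'I_N).
Hypotheses (f_pm : perfect_matching f) (f_bichrom : bichromatic red f).
Hypothesis f_nc : noncrossing f.
Hypotheses (lt_a1a2 : (a1 < a2)%N) (lt_a2fa2 : (a2 < f a2)%N).
Hypothesis lt_fa2fa1 : (f a2 < f a1)%N.
Hypothesis a1a2_colors : (a1 \in red) != (a2 \in red).
Hypothesis between_closed : forall s : 'I_N, (a1 < s < a2)%N -> (a1 < f s < a2)%N.

(* Conjugating f by the transposition of a2 and f a1 replaces the edges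
   {a1, f a1}, {a2, f a2} by {a1, a2}, {f a2, f a1}. *)
Definition swap := conj_matching (tperm a2 (f a1)) f.

Let f_inv : involutive f. Proof. by move=> i; case: (f_pm i). Qed.
Let lt_a1fa1 := ltn_trans lt_a1a2 (ltn_trans lt_a2fa2 lt_fa2fa1).
Let a1_a2 := ord_ltn_neq lt_a1a2.
Let a1_fa1 := ord_ltn_neq lt_a1fa1.
Let a2_fa2 := ord_ltn_neq lt_a2fa2.
Let fa2_fa1 := ord_ltn_neq lt_fa2fa1.
Let a1_fa2 := ord_ltn_neq (ltn_trans lt_a1a2 lt_a2fa2).
Let a2_fa1 := ord_ltn_neq (ltn_trans lt_a2fa2 lt_fa2fa1).

Lemma swap_a1 : swap a1 = a2.
Proof. by rewrite /swap /conj_matching tpermV tpermD ?tpermR // eq_sym. Qed.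

Lemma swap_a2 : swap a2 = a1.
Proof. by rewrite /swap /conj_matching tpermV tpermL f_inv tpermD // eq_sym. Qed.

Lemma swap_fa1 : swap (f a1) = f a2.
Proof. by rewrite /swap /conj_matching tpermV tpermR tpermD // eq_sym. Qed.

Lemma swap_fa2 : swap (f a2) = f a1.
Proof. by rewrite /swap /conj_matching tpermV tpermD ?f_inv ?tpermL // eq_sym. Qed.

Lemma swap_other i : i != a1 -> i != a2 -> i != f a1 -> i != f a2 -> swap i = f i.
Proof.
move=> i_a1 i_a2 i_fa1 i_fa2; rewrite /swap /conj_matching tpermV.
rewrite (tpermD (z := i)) 1?eq_sym // tpermD //.
  by apply: contra i_fa2 => /eqP ->; rewrite f_inv.
by apply: contra i_a1 => /eqP/(can_inj f_inv) ->.
Qed.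

Lemma tperm_swap_mem i : (tperm a2 (f a1) i \in red) = (i \in red).
Proof.
have same_color : (f a1 \in red) = (a2 \in red).
  rewrite (bichromatic_mem f_bichrom).
  by move: a1a2_colors; case: (a1 \in red) (a2 \in red) => [] [].
by case: tpermP => [->|->|].
Qed.

Lemma swap_perfect_matching : perfect_matching swap.
Proof. exact: perfect_matching_conj. Qed.

Lemma swap_bichromatic : bichromatic red swap.
Proof. exact: bichromatic_conj tperm_swap_mem f_bichrom. Qed.

Variant swap_spec (i : 'I_N) : nat -> nat -> Prop :=
  | SwapA1 : swap_spec i a1 a2
  | SwapA2 : swap_spec i a2 a1
  | SwapFA1 : swap_spec i (f a1) (f a2)
  | SwapFA2 : swap_spec i (f a2) (f a1)
  | SwapOther of [/\ (i : nat) != a1, (i : nat) != a2, (i : nat) != f a1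
                   & (i : nat) != f a2] : swap_spec i i (f i).

Lemma swapP i : swap_spec i i (swap i).
Proof.
have [->|i_a1] := eqVneq i a1; first by rewrite swap_a1; constructor.
have [->|i_a2] := eqVneq i a2; first by rewrite swap_a2; constructor.
have [->|i_fa1] := eqVneq i (f a1); first by rewrite swap_fa1; constructor.
have [->|i_fa2] := eqVneq i (f a2); first by rewrite swap_fa2; constructor.
by rewrite swap_other //; constructor; split; rewrite val_eqE.
Qed.

Lemma swap_noncrossing : noncrossing swap.
Proof.
have cross (u v : 'I_N) : (u < v)%N -> (v < f u)%N -> (f u < f v)%N -> False.
  by move=> uv vfu fufv; case: (@f_nc u v).
(* {a1, a2} crosses no edge as (a1, a2) is closed under f, and {f a2, f a1}
   none as it lies between the nested edges at a1 and a2.  The ordinal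
   disequalities are cleared only because they slow lia down. *)
move=> i j []; case: (swapP i) => [||||[i_a1 i_a2 i_fa1 i_fa2]];
case: (swapP j) => [||||[j_a1 j_a2 j_fa1 j_fa2]] => lt_ij lt_j lt_g;
  clear a1_a2 a1_fa1 a2_fa2 fa2_fa1 a1_fa2 a2_fa1; try lia.
- by have := @between_closed j; lia.
- by have := cross a1 j; lia.
- by have := cross i a1; lia.
- by have := cross i a1; have := cross a2 i; have := @between_closed i; lia.
- by have := cross i j; lia.
Qed.

Lemma swap_admissible : admissible red swap.
Proof.
by split; [exact: swap_perfect_matching | exact: swap_bichromatic | exact: swap_noncrossing].
Qed.

Variables (R : realFieldType) (x : 'I_N -> R).
Hypothesis x_incr : forall i j : 'I_N, (i < j)%N -> x i < x j.

Lemma mweight_swap_lt : mweight x swap < mweight x f.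
Proof.
have dist (u v : 'I_N) : (u < v)%N ->
    `|x v - x u| = x v - x u /\ `|x u - x v| = x v - x u.
  by move=> lt_uv; rewrite (distrC (x u)) ger0_norm ?subr_ge0 ?ltW ?x_incr.
have sum_diff : \sum_i `|x (f i) - x i| - \sum_i `|x (swap i) - x i| =
                (x (f a2) - x a2) * 4.
  rewrite -sumrB (bigD1 a1) // (bigD1 a2) 1?eq_sym //= (bigD1 (f a1)) /=; last first.
    by rewrite !(eq_sym (f a1)) a1_fa1 a2_fa1.
  rewrite (bigD1 (f a2)) /=; last first.
    by rewrite (eq_sym (f a2) a1) (eq_sym (f a2) a2) a1_fa2 a2_fa2 fa2_fa1.
  rewrite big1 => [|i /andP[/andP[/andP[i_a1 i_a2] i_fa1] i_fa2]]; last first.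
    by rewrite swap_other ?subrr.
  rewrite swap_a1 swap_a2 swap_fa1 swap_fa2 !f_inv.
  case: (dist _ _ lt_a1a2) (dist _ _ lt_a1fa1) => -> -> [-> ->].
  case: (dist _ _ lt_a2fa2) (dist _ _ lt_fa2fa1) => -> -> [-> ->].
  lra.
have := mweight_double x swap_perfect_matching; have := mweight_double x f_pm.
have := x_incr lt_a2fa2; rewrite !mulr2n; lra.
Qed.

End Swap.

Lemma min_weight_balanced_prefix_closed (R : realFieldType) N (x : 'I_N -> R)
    (red : {set 'I_N}) (f : 'I_N -> 'I_N) (k : nat) :
  (forall i j : 'I_N, (i < j)%N -> x i < x j) ->
  min_weight_matching x red f -> balanced_prefix red k ->
  forall i : 'I_N, (i < k)%N -> (f i < k)%N.
Proof.
move=> x_incr [[f_pm f_bichrom f_nc] f_min] bal i lt_ik.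
rewrite ltnNge; apply/negP => le_kfi.
have f_inv : involutive f by move=> j; case: (f_pm j).
have i_lv : i \in leaving f k by rewrite !inE lt_ik -leqNgt le_kfi.
have [r [b [r_lv b_lv r_red b_blue]]] := balanced_leaving_colors f_inv f_bichrom bal i_lv.
have [a1 [a2 [a1_lv a2_lv lt_a1a2 colors adjacent]]] :=
  adjacent_color_change r_lv b_lv r_red b_blue.
move: a1_lv a2_lv; rewrite !inE -!leqNgt => /andP[le_kfa1 lt_a1k] /andP[le_kfa2 lt_a2k].
have /andP[_ lt_fa2fa1] : (a1 < f a2 < f a1)%N.
  by apply: noncrossing_inside => //; rewrite lt_a1a2 (leq_trans lt_a2k).
have between_closed (s : 'I_N) : (a1 < s < a2)%N -> (a1 < f s < a2)%N.
  move=> /andP[lt_a1s lt_sa2]; have lt_sk := ltn_trans lt_sa2 lt_a2k.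
  have lt_fsk : (f s < k)%N.
    by move: (adjacent s); rewrite lt_a1s lt_sa2 !inE lt_sk !andbT negbK; apply.
  have /andP[-> _] : (a1 < f s < f a1)%N.
    by apply: noncrossing_inside => //; rewrite lt_a1s (leq_trans lt_sk).
  rewrite ltnNge leq_eqVlt; apply/negP => /orP[/eqP/val_inj a2_fs|lt_a2fs].
    by move: le_kfa2; rewrite a2_fs f_inv leqNgt lt_sk.
  have /andP[_ lt_fa2fs] : (s < f a2 < f s)%N by apply: noncrossing_inside; rewrite ?lt_sa2.
  by move: le_kfa2; rewrite leqNgt (ltn_trans lt_fa2fs lt_fsk).
have lt_a2fa2 := leq_trans lt_a2k le_kfa2.
have := f_min _ (swap_admissible f_pm f_bichrom f_nc lt_a1a2 lt_a2fa2 lt_fa2fa1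
                                 colors between_closed).
by rewrite leNgt (mweight_swap_lt f_pm lt_a1a2 lt_a2fa2 lt_fa2fa1 x_incr).
Qed.

Theorem mainTheorem5 (R : realFieldType) (n : nat)
  (x : 'I_(n.*2) -> R) (hx : forall i j : 'I_(n.*2), (i < j)%N -> x i < x j)
  (red : {set 'I_(n.*2)}) (hred : #|red| = n)
  (m : nat) (hm0 : (0 < m)%N) (hmn : (m <= n)%N)
  (hbal : balanced_prefix red m.*2)
  (hmin : forall k : nat, (0 < k)%N -> (k < m.*2)%N -> ~~ balanced_prefix red k)
  (p1 p2m : 'I_(n.*2)) (hp1 : val p1 = 0%N) (hp2m : val p2m = (m.*2).-1) :
  (p1 \in red) != (p2m \in red) /\
  forall f : 'I_(n.*2) -> 'I_(n.*2), min_weight_matching x red f -> f p1 = p2m.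
Proof.
split; first exact: first_balanced_prefix_end_colors hm0 hbal hmin hp1 hp2m.
move=> f f_min; have [[f_pm f_bichrom f_nc] _] := f_min.
have f_inv : involutive f by move=> i; case: (f_pm i).
have lt_fp1 : (f p1 < m.*2)%N.
  by apply: min_weight_balanced_prefix_closed hx f_min hbal _ _; rewrite hp1 double_gt0.
have : ~~ ((f p1).+1 < m.*2)%N.
  apply: contraL (closed_prefix_balanced f_inv f_bichrom _) => [|i]; first exact: hmin.
  by rewrite !ltnS; apply: noncrossing_first_edge_closed.
by move=> not_lt; apply: val_inj; rewrite /= hp2m; lia.
Qed.
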